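(* Let $k$ be a nonnegative integer. Then there exist rational numbers $\xi_0,\dots,\xi_{k-1}$ (depending only on $k$) such that for every strict partition $\lambda$, with inner corner contents $x_0,\dots,x_m$, and every $i\in\{0,\dots,m\}$ for which $\lambda^{i+}$ is defined, $$q_k(\lambda^{i+})-q_k(\lambda)=\sum_{j=0}^{k-1}\xi_j\binom{x_i}{2}^j.$$
   Context: A strict partition is a finite strictly decreasing sequence of positive integers $\lambda=(\lambda_1>\cdots>\lambda_\ell)$ (the empty sequence is allowed); $\ell(\lambda)=\ell$, and $\lambda_i=0$ for $i>\ell(\lambda)$. The (shifted Young) diagram of $\lambda$ is the set of boxes $(i,j)$ with $1\le i\le\ell(\lambda)$, $i+1\le j\le i+\lambda_i$ (row $i$, column $j$); $\lambda$ is identified with its diagram; the content of $\square=(i,j)$ is $c_\square=j-i$. An outer corner of $\lambda$ is a box of $\lambda$ whose removal leaves the diagram of a strict partition. Let $(\alpha_1,\beta_1),\dots,(\alpha_m,\beta_m)$ be the outer corners with $\alpha_1>\cdots>\alpha_m$, and $y_j=\beta_j-\alpha_j$. Set $\alpha_{m+1}=0$, $\beta_0=\ell(\lambda)+1$, and $x_i=\beta_i-\alpha_{i+1}$ for $0\le i\le m$ (inner corner contents); one has $x_0=1\le y_1<x_1<\cdots<y_m<x_m$. For $k\ge0$, $q_k(\lambda)=\sum_{i=0}^m\binom{x_i}{2}^k-\sum_{i=1}^m\binom{y_i}{2}^k$. For $1\le i\le m$, $\lambda^{i+}$ is the strict partition obtained from $\lambda$ by adding a box of content $x_i$; if $m=0$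 or $y_1>1$, $\lambda^{0+}$ is the strict partition obtained by adding a box of content $x_0=1$ (a new row of length 1), and $\lambda^{0+}$ is undefined otherwise. *)

From HB Require Import structures.
From mathcomp Require Import all_boot all_order all_algebra.
From mathcomp Require Import boolp.
Set Implicit Arguments. Unset Strict Implicit. Unset Printing Implicit Defensive.
Import Order.TTheory GRing.Theory Num.Theory.

Definition strict_partition (lam : seq nat) : bool :=
  sorted (fun a b => b < a) lam && all (fun a => 0 < a) lam.

(* lambda_i (1-indexed), with lambda_i = 0 for i > l(lambda). *)
Definition part (lam : seq nat) (i : nat) : nat := nth 0 lam i.-1.

(* Boxes are pairs (i, j) = (row, column). *)
Definition box := (nat * nat)%type.

Definition in_diagram (lam : seq nat) (b : box) : bool :=
  [&& 1 <= b.1, b.1 <= size lam, b.1 + 1 <= b.2 & b.2 <= b.1 + part lam b.1].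

(* Content c_box = j - i (always >= 1 for boxes of a diagram). *)
Definition content (b : box) : nat := b.2 - b.1.

Definition outer_corner (lam : seq nat) (b : box) : Prop :=
  in_diagram lam b /\
  exists mu : seq nat, strict_partition mu /\
    forall b', in_diagram mu b' = in_diagram lam b' && (b' != b).

(* The outer corners (alpha_1, beta_1), ..., (alpha_m, beta_m) listed with
   alpha_1 > ... > alpha_m (all boxes of lambda lie in rows 1..l and
   columns 1..l + lambda_1; distinct corners lie in distinct rows). *)
Definition outer_corners (lam : seq nat) : seq box :=
  [seq b <- [seq (i, j) | i <- rev (iota 1 (size lam)),
                          j <- iota 1 (size lam + head 0 lam)]
   | `[< outer_corner lam b >]].

Definition ycont (lam : seq nat) : seq nat := map content (outer_corners lam).

(* x_i = beta_i - alpha_{i+1}, 0 <= i <= m, with beta_0 = l+1, alpha_{m+1} = 0 *)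
Definition xcont (lam : seq nat) : seq nat :=
  [seq p.1 - p.2 | p <- zip ((size lam).+1 :: map snd (outer_corners lam))
                            (rcons (map fst (outer_corners lam)) 0)].

Definition qk (k : nat) (lam : seq nat) : rat :=
  (\sum_(x <- xcont lam) ('C(x, 2) ^ k)%:R - \sum_(y <- ycont lam) ('C(y, 2) ^ k)%:R)%R.

(* mu is a strict partition obtained from lambda by adding one box of
   content c (i.e. mu = lambda^{i+} when c = x_i and lambda^{i+} is defined). *)
Definition add_box (lam : seq nat) (c : nat) (mu : seq nat) : Prop :=
  strict_partition mu /\
  exists b : box, ~~ in_diagram lam b /\ content b = c /\
    forall b', in_diagram mu b' = in_diagram lam b' || (b' == b).

(* Contents along row r of a shifted diagram run from 1 to lambda_r, and
   consecutive rows lying between two outer corners end in the same column.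
   Hence q_k telescopes row by row:
     q_k(lambda) = C(1,2)^k + sum_r (C(lambda_r + 1, 2)^k - C(lambda_r, 2)^k).
   A box of content c lengthens a row from c - 1 to c, so q_k changes by the
   second difference f(c+1) - 2 f(c) + f(c-1) of f(n) = C(n,2)^k.  With
   t = C(c,2) one has C(c+1,2) = t + c and C(c-1,2) = t + (1 - c); as c and
   1 - c sum to 1 and have product -2t, every power sum c^i + (1 - c)^i is a
   polynomial in t of degree at most i (a Lucas sequence), and the binomial
   expansion yields a polynomial in t of degree less than k. *)

From HB Require Import structures.
From mathcomp Require Import all_boot all_order all_algebra.
From mathcomp Require Import boolp zify ring.
Set Implicit Arguments.
Unset Strict Implicit.
Unset Printing Implicit Defensive.
Import Order.TTheory GRing.Theory Num.Theory.

Section SecondDifference.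
Local Open Scope ring_scope.
Variable R : comNzRingType.

Definition bin2_pow (k n : nat) : R := ('C(n, 2) ^ k)%:R.

Fixpoint lucas (n : nat) : {poly R} :=
  if n is m.+1 then (if m is n'.+1 then lucas m + 2%:R *: ('X * lucas n') else 1)
  else 2%:P.

Arguments lucas : simpl never.

Lemma lucasSS n : lucas n.+2 = lucas n.+1 + 2%:R *: ('X * lucas n).
Proof. by []. Qed.

Lemma size_lucasSS n :
  (size (lucas n.+2) <= maxn (size (lucas n.+1)) (size (lucas n)).+1)%N.
Proof.
rewrite lucasSS; apply: leq_trans (size_polyD _ _) _.
rewrite geq_max leq_maxl /=; apply: leq_trans (leq_maxr _ _).
apply: leq_trans (size_scale_leq _ _) _.
by apply: leq_trans (size_polyMleq _ _) _; rewrite size_polyX.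
Qed.

Lemma size_lucas n : (size (lucas n) <= maxn 1 n)%N.
Proof.
suff: (size (lucas n) <= maxn 1 n)%N && (size (lucas n.+1) <= maxn 1 n.+1)%N.
  by case/andP.
elim: n => [|n /andP [IHn IHn1]]; apply/andP; split => //.
- exact: size_polyC_leq1.
- by rewrite size_poly1.
- apply: leq_trans (size_lucasSS n) _; rewrite geq_max.
  by apply/andP; split; [apply: leq_trans IHn1 _ | apply: leq_trans IHn _]; lia.
Qed.

Lemma horner_lucas (a b t : R) : a + b = 1 -> a * b = - (2%:R * t) ->
  forall n, (lucas n).[t] = a ^+ n + b ^+ n.
Proof.
move=> sum_ab prod_ab n.
suff: ((lucas n).[t] = a ^+ n + b ^+ n) /\
      ((lucas n.+1).[t] = a ^+ n.+1 + b ^+ n.+1) by case.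
elim: n => [|n [IHn IHn1]].
  by rewrite /= hornerC hornerE expr0 !expr1 sum_ab.
split=> //; rewrite lucasSS hornerD hornerZ hornerM hornerX IHn IHn1.
have -> : a ^+ n.+2 + b ^+ n.+2 =
          (a + b) * (a ^+ n.+1 + b ^+ n.+1) - a * b * (a ^+ n + b ^+ n).
  by rewrite !exprS; ring.
by rewrite sum_ab prod_ab; ring.
Qed.

Lemma bin2_pow_second_difference k : exists2 p : {poly R}, (size p <= k)%N &
  forall d, bin2_pow k d.+2 - bin2_pow k d.+1 - (bin2_pow k d.+1 - bin2_pow k d)
            = p.[('C(d.+1, 2))%:R].
Proof.
exists (\sum_(i < k) ('X^(k - i.+1) * lucas i.+1) *+ 'C(k, i.+1)).
  apply: (big_ind (fun p : {poly R} => size p <= k)%N) => [||i _].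
  - by rewrite size_poly0.
  - move=> p q p_k q_k.
    by apply: leq_trans (size_polyD _ _) _; rewrite geq_max p_k q_k.
  - rewrite -scaler_nat; apply: leq_trans (size_scale_leq _ _) _.
    apply: leq_trans (size_polyMleq _ _) _; rewrite size_polyXn.
    have := size_lucas i.+1; have := ltn_ord i; lia.
move=> d; set t : R := ('C(d.+1, 2))%:R; set D : R := d%:R.
have bin2_d2 : bin2_pow k d.+2 = (t + (D + 1)) ^+ k.
  by rewrite /bin2_pow binS bin1 natrX natrD natr1.
have bin2_d : bin2_pow k d = (t + - D) ^+ k.
  by rewrite /bin2_pow natrX /t binS bin1 natrD addrK.
have two_t : 2%:R * t = (D + 1) * D.
  by rewrite /t /D -natrM -mul_bin_diag bin1 natrM natr1 mulrC.
have prod_Dd : (D + 1) * - D = - (2%:R * t) by rewrite two_t mulrN.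
rewrite bin2_d2 bin2_d /bin2_pow natrX -/t !exprDn horner_sum.
rewrite !big_ord_recl !subn0 !expr0 !mulr1 !bin0 !mulr1n.
have collect (x y z : R) : z + x - z - (z - (z + y)) = x + y by ring.
have sum_Dd : (D + 1) + - D = 1 by ring.
rewrite collect -big_split; apply: eq_bigr => i _.
rewrite /bump /= hornerMn hornerM hornerXn (horner_lucas sum_Dd prod_Dd).
by rewrite mulrDr mulrnDl.
Qed.
End SecondDifference.

Arguments bin2_pow {R} k n.

Lemma in_diagramE s r c :
  in_diagram s (r, c) = [&& 0 < r, r < c & c <= r + part s r].
Proof.
rewrite /in_diagram /= addn1; case: (leqP r (size s)) => [r_le|r_gt].
  by case: (0 < r); rewrite //= ?andbT.
rewrite /part nth_default; last lia.
by rewrite addn0 andbF; apply/esym/negbTE; apply/and3P; case; lia.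
Qed.

Lemma in_diagramP s r c :
  reflect [/\ 0 < r, r < c & c <= r + part s r] (in_diagram s (r, c)).
Proof. by rewrite in_diagramE; apply: and3P. Qed.

Lemma eq_part s1 s2 r : 0 < r ->
  (forall c, in_diagram s1 (r, c) = in_diagram s2 (r, c)) -> part s1 r = part s2 r.
Proof.
move=> r_gt0 same_row.
have leq_row u v : (forall c, in_diagram u (r, c) -> in_diagram v (r, c)) ->
    part u r <= part v r.
  move=> sub_row; case u_r: (part u r) => [//|p].
  have /sub_row : in_diagram u (r, r + p.+1) by rewrite in_diagramE u_r; lia.
  by rewrite in_diagramE; lia.
by apply/eqP; rewrite eqn_leq !leq_row // => c; rewrite same_row.
Qed.

Lemma part_default s r : size s < r -> part s r = 0.
Proof. by move=> r_gt; rewrite /part nth_default //; lia. Qed.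

Lemma strict_partitionP s : reflect
  ((forall i, i.+1 < size s -> nth 0 s i.+1 < nth 0 s i) /\
   (forall i, i < size s -> 0 < nth 0 s i)) (strict_partition s).
Proof.
apply: (iffP andP) => [[/(sortedP 0) dec /(all_nthP 0) pos] | [dec pos]] //.
by split; [apply/(sortedP 0) | apply/(all_nthP 0)].
Qed.

Section StrictPartition.
Variable s : seq nat.
Hypothesis s_strict : strict_partition s.

Lemma part_gt0 r : 0 < r -> (0 < part s r) = (r <= size s).
Proof.
move=> r_gt0; case: (leqP r (size s)) => [r_le|r_gt].
  by case/strict_partitionP: s_strict => _ pos; apply: pos; lia.
by rewrite part_default //; lia.
Qed.

Lemma ltn_part r : 0 < r <= size s -> part s r.+1 < part s r.
Proof.
case/andP=> r_gt0 r_le; case: (ltnP r (size s)) => [r_lt|r_ge].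
  case/strict_partitionP: s_strict => dec _.
  by rewrite /part /= -{1}(prednK r_gt0); apply: dec; lia.
by rewrite part_default ?part_gt0 //; lia.
Qed.

Lemma leq_part_head r : 0 < r -> part s r <= head 0 s.
Proof.
elim: r => [//|[|r] IHr] _; first by rewrite /part nth0.
case: (leqP r.+1 (size s)) => [r_le|r_gt]; last by rewrite part_default //; lia.
by apply: leq_trans (IHr isT); apply: ltnW; apply: ltn_part; rewrite r_le.
Qed.

End StrictPartition.

Definition corner_row (s : seq nat) (r : nat) : bool :=
  (r == size s) || ((part s r.+1).+1 < part s r).

Lemma in_diagram_decr_row s mu r : 0 < r -> 0 < part s r ->
  part mu r = (part s r).-1 ->
  (forall i, 0 < i -> i != r -> part mu i = part s i) ->
  forall b, in_diagram mu b = in_diagram s b && (b != (r, r + part s r)).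
Proof.
move=> r_gt0 part_r_gt0 mu_r mu_i [i c]; rewrite !in_diagramE xpair_eqE.
case: (eqVneq i r) => [->|i_ne]; first by rewrite mu_r; lia.
by case: (posnP i) => [-> //|i_gt0]; rewrite mu_i //; lia.
Qed.

Lemma exists_decr_row s r : strict_partition s -> 0 < r <= size s ->
  corner_row s r -> exists2 mu, strict_partition mu &
    part mu r = (part s r).-1 /\ forall i, 0 < i -> i != r -> part mu i = part s i.
Proof.
case: r => [//|j] s_strict /andP [_ j_lt] corner; rewrite /part /= in corner *.
have [dec pos] := strict_partitionP _ s_strict.
case: (eqVneq (nth 0 s j) 1) => [s_j1|s_j_ne1].
  have j_last : j.+1 = size s by move: corner; rewrite /corner_row /part /= s_j1; lia.
  exists (take j s).
    case/andP: s_strict => s_sorted s_pos; rewrite /strict_partition take_sorted //.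
    by apply/allP => x /mem_take; apply: (allP s_pos).
  have size_take_j : size (take j s) = j by rewrite size_takel // ltnW.
  split=> [|[//|i] _ i_ne /=]; first by rewrite s_j1 nth_default ?size_take_j.
  case: (ltnP i j) => [i_lt|i_ge]; first by rewrite nth_take.
  by rewrite !nth_default ?size_take_j //; lia.
have j_pos := pos j j_lt.
exists (set_nth 0 s j (nth 0 s j).-1).
  apply/strict_partitionP; rewrite size_set_nth (maxn_idPr j_lt).
  split=> i i_lt; rewrite !nth_set_nth /=; last by case: eqP => [_|]; [lia|auto].
  have := dec i i_lt; move: corner; rewrite /corner_row /part /=.
  case: (eqVneq i j) => [<-|_]; last case: (eqVneq i.+1 j) => [<-|_] //.
    by rewrite (gtn_eqF (ltnSn i)); lia.
  by lia.
by rewrite /= nth_set_nth /= eqxx; split=> // [[//|i]] _ i_ne;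
  rewrite nth_set_nth /=; case: eqP => //; lia.
Qed.

Lemma outer_corner_end s r c : outer_corner s (r, c) ->
  [/\ 0 < r, 0 < part s r & c = r + part s r].
Proof.
case=> /in_diagramP [r_gt0 r_lt c_le] [mu [_ mu_diag]]; split=> //; first lia.
apply/eqP; rewrite eqn_leq c_le /= leqNgt; apply/negP => c_lt.
have /in_diagramP [_ _ c1_le] : in_diagram mu (r, c.+1).
  by rewrite mu_diag in_diagramE xpair_eqE; lia.
have : in_diagram mu (r, c) by rewrite in_diagramE; lia.
by rewrite mu_diag eqxx andbF.
Qed.

Lemma outer_corner_row s r c : strict_partition s -> outer_corner s (r, c) ->
  corner_row s r.
Proof.
move=> s_strict rc_corner; have [r_gt0 part_r_gt0 c_end] := outer_corner_end rc_corner.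
subst c; case: rc_corner => _ [mu [mu_strict mu_diag]].
rewrite /corner_row; case: eqVneq => //= r_ne; rewrite ltnNge; apply/negP => no_gap.
have r_lt : r < size s by have := part_gt0 s_strict r_gt0; lia.
have next_lt : part s r.+1 < part s r by apply: ltn_part; lia.
have next_gt0 : 0 < part s r.+1 by rewrite part_gt0.
have mu_next : part mu r.+1 = part s r.+1.
  by apply: eq_part => // c'; rewrite mu_diag xpair_eqE (gtn_eqF (ltnSn r)) andbT.
have /in_diagramP [_ _ mu_r_ge] : in_diagram mu (r, r + (part s r).-1).
  by rewrite mu_diag in_diagramE xpair_eqE; lia.
have mu_r_lt : part mu r < part s r.
  rewrite ltnNge; apply/negP => mu_r_ge'.
  have : in_diagram mu (r, r + part s r) by rewrite in_diagramE; lia.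
  by rewrite mu_diag eqxx andbF.
have := @ltn_part mu mu_strict r; rewrite -part_gt0 //; lia.
Qed.

Lemma outer_cornerP s r c : strict_partition s ->
  outer_corner s (r, c) <-> [/\ 0 < r <= size s, c = r + part s r & corner_row s r].
Proof.
move=> s_strict; split=> [rc_corner | [/andP [r_gt0 r_le] c_end corner]].
  have [r_gt0 part_r_gt0 c_end] := outer_corner_end rc_corner.
  by rewrite r_gt0 -part_gt0 // (outer_corner_row s_strict rc_corner).
have part_r_gt0 : 0 < part s r by rewrite part_gt0.
rewrite c_end; split; first by rewrite in_diagramE; lia.
have [|mu mu_strict [mu_r mu_i]] := exists_decr_row s_strict _ corner; first lia.
by exists mu; split=> //; apply: in_diagram_decr_row.
Qed.

Definition corner_rows (s : seq nat) : seq nat :=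
  [seq r <- rev (iota 1 (size s)) | corner_row s r].

Lemma outer_cornersE s : strict_partition s ->
  outer_corners s = [seq (r, r + part s r) | r <- corner_rows s].
Proof.
move=> s_strict; rewrite /outer_corners /corner_rows.
have : all (fun r => 0 < r <= size s) (rev (iota 1 (size s))).
  by apply/allP => r; rewrite mem_rev mem_iota; lia.
elim: (rev _) => [//|r rs IHrs] /= /andP [r_range rs_range].
rewrite filter_cat IHrs // filter_map.
rewrite (@eq_in_filter _ _ (fun c => (c == r + part s r) && corner_row s r)); last first.
  move=> c _ /=; apply/asboolP/andP => [/(outer_cornerP _ _ s_strict) [_ -> ->] //|].
  by case=> /eqP -> corner; apply/(outer_cornerP _ _ s_strict).
case: (corner_row s r); last first.
  by rewrite (@eq_filter _ _ pred0) ?filter_pred0 // => c; rewrite andbF.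
rewrite (@eq_filter _ _ (pred1 (r + part s r))); last by move=> c; rewrite andbT.
rewrite filter_pred1_uniq ?iota_uniq // mem_iota.
by have := leq_part_head s_strict (r := r); lia.
Qed.

Lemma ycontE s : strict_partition s -> ycont s = map (part s) (corner_rows s).
Proof.
by move=> s_strict; rewrite /ycont outer_cornersE // -map_comp; apply: eq_map => r;
  rewrite /content /= addKn.
Qed.

Lemma xcontE s : strict_partition s -> xcont s =
  [seq p.1 - p.2 | p <- zip ((size s).+1 :: [seq r + part s r | r <- corner_rows s])
                            (rcons (corner_rows s) 0)].
Proof.
move=> s_strict; rewrite /xcont outer_cornersE // -!map_comp.
by rewrite (@eq_map _ _ (fst \o _) id) ?map_id.
Qed.

Lemma strict_partition_cons h t : strict_partition (h :: t) ->
  strict_partition t /\ head 0 t < h.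
Proof.
case/andP=> /= sorted_ht /andP [h_gt0 t_pos].
split; first by rewrite /strict_partition (path_sorted sorted_ht) t_pos.
by case: t sorted_ht {t_pos} => //= x t /andP [].
Qed.

Lemma part_cons h t r : 0 < r -> part (h :: t) r.+1 = part t r.
Proof. by case: r. Qed.

Lemma corner_row_cons h t r : 0 < r -> corner_row (h :: t) r.+1 = corner_row t r.
Proof. by move=> r_gt0; rewrite /corner_row /= eqSS !part_cons. Qed.

Lemma corner_row1_head h t : strict_partition (h :: t) ->
  ~~ corner_row (h :: t) 1 -> h = (head 0 t).+1.
Proof.
case/strict_partition_cons => _ head_lt; rewrite /corner_row negb_or.
by case: t head_lt => [|x t] /=; rewrite /part /=; lia.
Qed.

Lemma corner_rows_gt0 s r : r \in corner_rows s -> 0 < r.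
Proof. by rewrite mem_filter mem_rev mem_iota => /andP [_ /andP []]. Qed.

Lemma corner_rows_cons h t : corner_rows (h :: t) =
  if corner_row (h :: t) 1 then rcons (map succn (corner_rows t)) 1
  else map succn (corner_rows t).
Proof.
rewrite /corner_rows /= (iotaDl 1 1) rev_cons -map_rev filter_rcons filter_map.
congr (if _ then rcons _ _ else _); congr map; apply: eq_in_filter => r;
  by rewrite mem_rev mem_iota => /andP [r_gt0 _] /=; rewrite add1n corner_row_cons.
Qed.

Lemma ycont_cons h t : strict_partition (h :: t) -> ycont (h :: t) =
  if corner_row (h :: t) 1 then rcons (ycont t) h else ycont t.
Proof.
move=> ht_strict; have [t_strict _] := strict_partition_cons ht_strict.
have shift : map (part (h :: t)) (map succn (corner_rows t)) = ycont t.
  rewrite ycontE // -map_comp.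
  by apply/eq_in_map => r /corner_rows_gt0 r_gt0 /=; rewrite part_cons.
by rewrite ycontE // corner_rows_cons; case: ifP; rewrite ?map_rcons shift.
Qed.

Lemma map_subn_zip_succ (A B : seq nat) :
  [seq p.1 - p.2 | p <- zip (map succn A) (map succn B)] =
  [seq p.1 - p.2 | p <- zip A B].
Proof. by elim: A B => [|x A IHA] [|y B] //=; rewrite IHA subSS. Qed.

Lemma xcont_cons h t X a : strict_partition (h :: t) -> xcont t = rcons X a ->
  xcont (h :: t) =
  if corner_row (h :: t) 1 then rcons (xcont t) h.+1 else rcons X a.+1.
Proof.
move=> ht_strict xt; have [t_strict _] := strict_partition_cons ht_strict.
have xtE := xcontE t_strict.
set R := corner_rows t in xtE *; set b := (size t).+1 in xtE; set B := map _ R in xtE.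
have size_B : size (belast b B) = size R by rewrite size_belast size_map.
have [X_eq a_eq] : [seq p.1 - p.2 | p <- zip (belast b B) R] = X /\ last b B = a.
  move: xt; rewrite xtE lastI zip_rcons ?size_rcons // map_rcons subn0.
  by case/rcons_inj.
have B_cons : (size (h :: t)).+1 :: [seq r + part (h :: t) r | r <- map succn R] =
              map succn (b :: B).
  rewrite /= -!map_comp; congr (_ :: _).
  by apply/eq_in_map => r /corner_rows_gt0 r_gt0 /=; rewrite part_cons // addSn.
rewrite xcontE // corner_rows_cons; case: ifP => _.
  rewrite map_rcons -rcons_cons B_cons -(map_rcons succn R 0) zip_rcons; last first.
    by rewrite !size_map /= size_rcons size_map.
  by rewrite map_rcons map_subn_zip_succ -xtE add1n subn0.
rewrite B_cons lastI map_rcons zip_rcons ?size_map //.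
by rewrite map_rcons map_subn_zip_succ subn0 X_eq a_eq.
Qed.

Lemma xcont_last s : strict_partition s -> exists X, xcont s = rcons X (head 0 s).+1.
Proof.
elim: s => [|h t IHt] s_strict; first by exists [::].
have [t_strict _] := strict_partition_cons s_strict.
have [X xt] := IHt t_strict; rewrite (xcont_cons s_strict xt).
case: ifPn => [_|noncorner]; first by exists (xcont t).
by exists X; rewrite -(corner_row1_head s_strict noncorner).
Qed.

Section Qk.
Local Open Scope ring_scope.
Variable k : nat.

Lemma qk_nil : qk k [::] = bin2_pow k 1.
Proof. by rewrite /qk /= big_seq1 big_nil subr0. Qed.

Lemma qk_cons h t : strict_partition (h :: t) ->
  qk k (h :: t) = qk k t + (bin2_pow k h.+1 - bin2_pow k h).
Proof.
move=> ht_strict; have [t_strict _] := strict_partition_cons ht_strict.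
have [X xt] := xcont_last t_strict.
rewrite /qk (ycont_cons ht_strict) (xcont_cons ht_strict xt) xt.
case: ifPn => [_|noncorner]; rewrite -!cats1 !big_cat !big_seq1 /= /bin2_pow.
  by ring.
by rewrite (corner_row1_head ht_strict noncorner); ring.
Qed.

Lemma qkE s : strict_partition s ->
  qk k s = bin2_pow k 1 + \sum_(a <- s) (bin2_pow k a.+1 - bin2_pow k a).
Proof.
elim: s => [|h t IHt] s_strict; first by rewrite qk_nil big_nil addr0.
have [t_strict _] := strict_partition_cons s_strict.
by rewrite qk_cons // IHt // big_cons; ring.
Qed.

End Qk.

Lemma add_box_row lam mu b : ~~ in_diagram lam b ->
  (forall b', in_diagram mu b' = in_diagram lam b' || (b' == b)) ->
  exists r, [/\ 0 < r, content b = (part lam r).+1,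
    part mu r = (part lam r).+1 &
    forall i, 0 < i -> i != r -> part mu i = part lam i].
Proof.
case: b => r c b_notin mu_diag.
have /in_diagramP [r_gt0 r_lt c_le] : in_diagram mu (r, c) by rewrite mu_diag eqxx orbT.
move: b_notin; rewrite in_diagramE r_gt0 r_lt /= -ltnNge => c_gt.
have c_end : c = r + (part lam r).+1.
  apply/eqP; rewrite eqn_leq leqNgt; apply/andP; split; last lia.
  apply/negP => c_gt'; have : in_diagram mu (r, c.-1) by rewrite in_diagramE; lia.
  by rewrite mu_diag in_diagramE xpair_eqE; lia.
exists r; split=> //; first by rewrite /content c_end /=; lia.
  apply/eqP; rewrite eqn_leq leqNgt; apply/andP; split; last lia.
  apply/negP => mu_r_gt; have : in_diagram mu (r, r + (part lam r).+2).
    by rewrite in_diagramE; lia.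
  by rewrite mu_diag in_diagramE xpair_eqE; lia.
move=> i i_gt0 i_ne; apply: eq_part => // c'.
by rewrite mu_diag xpair_eqE (negbTE i_ne) orbF.
Qed.

Lemma big_parts (V : nmodType) (f : nat -> V) s n : f 0%N = 0%R -> size s <= n ->
  (\sum_(a <- s) f a = \sum_(i < n) f (part s i.+1))%R.
Proof.
move=> f0 s_le; rewrite (big_nth 0) big_mkord (big_ord_widen n (f \o nth 0 s) s_le).
rewrite big_mkcond; apply: eq_bigr => i _ /=; case: ifPn => // i_ge.
by rewrite /part /= nth_default // leqNgt.
Qed.

Lemma qk_incr_row k lam mu r : strict_partition lam -> strict_partition mu ->
  0 < r -> part mu r = (part lam r).+1 ->
  (forall i, 0 < i -> i != r -> part mu i = part lam i) ->
  let d a := (bin2_pow k a.+1 - bin2_pow k a)%R in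
  (qk k mu - qk k lam = d (part lam r).+1 - d (part lam r))%R.
Proof.
move=> lam_strict mu_strict r_gt0 mu_r mu_i d.
have d0 : d 0%N = 0%R by rewrite /d /bin2_pow !bin_small // subrr.
have r_lt : r.-1 < size lam + size mu.
  by have := part_gt0 mu_strict r_gt0; rewrite mu_r; lia.
rewrite !qkE // (big_parts d0 (leq_addl (size lam) (size mu))).
rewrite (big_parts d0 (leq_addr (size mu) (size lam))).
rewrite [X in (X - _)%R]addrC addrKA -sumrB (bigD1 (Ordinal r_lt)) //=.
rewrite prednK // mu_r big1 ?addr0 // => i /eqP i_ne.
rewrite mu_i ?subrr //; apply/eqP => i_r.
by apply: i_ne; apply: val_inj => /=; lia.
Qed.

Theorem theorem3p5 (k : nat) :
  exists xi : nat -> rat,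
    forall lam : seq nat, strict_partition lam ->
    forall i : nat, i < size (xcont lam) ->
    forall mu : seq nat, add_box lam (nth 0 (xcont lam) i) mu ->
      (qk k mu - qk k lam =
       \sum_(j < k) xi j * ('C(nth 0 (xcont lam) i, 2) ^ j)%:R)%R.
Proof.
have [p p_size p_eval] := bin2_pow_second_difference rat k.
exists (fun j => p`_j)%R => lam lam_strict i _ mu.
case=> mu_strict [b [b_notin [b_content mu_diag]]].
have [r [r_gt0 content_b mu_r mu_i]] := add_box_row b_notin mu_diag.
rewrite -b_content content_b (qk_incr_row k lam_strict mu_strict r_gt0 mu_r mu_i) /=.
under eq_bigr do rewrite natrX.
by rewrite p_eval -horner_coef_wide.
Qed.
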